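(* Let $m\ge 0$ and $k\ge 1$ be integers such that $f=2^{m+k+1}+2^k-1$ is prime, and put $a=2^{m+k}f$ and $b=2^m f$. Let $x,y$ be positive integers with $(x-b)(y-b)=b^2$ such that $p=x-1$, $q=y-1$, $r=xy-1$ are primes, $p\neq q$, and none of $p,q,r$ divides $a$ (in particular none equals $f$ or $2$). Then $apq$ and $ar$ are amicable numbers.
   Context: For a positive integer $N$, $\sigma(N)$ denotes the sum of all positive divisors of $N$. Positive integers $M,N$ are amicable if $\sigma(M)-M=N$ and $\sigma(N)-N=M$. *)

From mathcomp Require Import all_boot all_order all_algebra.
Set Implicit Arguments. Unset Strict Implicit. Unset Printing Implicit Defensive.

Definition sigma (N : nat) : nat := \sum_(d <- divisors N) d.

Definition amicable (M N : nat) : Prop :=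
  0 < M /\ 0 < N /\ sigma M - M = N /\ sigma N - N = M.

From mathcomp Require Import all_boot all_order all_algebra.
From mathcomp Require Import zify.

(* As sigma is multiplicative, for primes p, q, r not dividing a with
   r + 1 = (p + 1)(q + 1) both sigma(apq) and sigma(ar) equal sigma(a)(r + 1),
   and the pair is amicable as soon as sigma(a)(r + 1) = a(pq + r).  For
   a = 2^(m+k) f one has sigma(a) = 2^k (2b - 1) and a = 2^k b, and the
   hyperbola (x - b)(y - b) = b^2, i.e. xy = b(x + y), turns the required
   identity into (2b - 1)xy = b(2xy - x - y). *)

Lemma sigmaE_uniq n s : 0 < n -> uniq s -> (forall d, (d \in s) = (d %| n)) ->
  sigma n = \sum_(d <- s) d.
Proof.
move=> n_gt0 s_uniq mem_s; apply: perm_big; apply: uniq_perm => //.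
  exact: divisors_uniq.
by move=> d; rewrite mem_s -dvdn_divisors.
Qed.

Lemma sigmaM_prime n p : 0 < n -> prime p -> ~~ (p %| n) ->
  sigma (n * p) = sigma n * p.+1.
Proof.
move=> n_gt0 p_pr p_ndvd_n; have p_gt0 := prime_gt0 p_pr.
have dvd_np d : (d %| n * p) = (d %| n) || (p %| d) && (d %/ p %| n).
  apply/idP/idP => [d_dvd|/orP[/dvdn_mulr //|/andP[p_dvd_d dp_dvd]]]; last first.
    by rewrite -(divnK p_dvd_d) dvdn_pmul2r.
  have [p_dvd_d|p_ndvd_d] := boolP (p %| d).
    by rewrite -(@dvdn_pmul2r p (d %/ p) n p_gt0) divnK // d_dvd orbT.
  by rewrite -(@Gauss_dvdl d n p) ?d_dvd // coprime_sym prime_coprime.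
rewrite (@sigmaE_uniq _ (divisors n ++ map (muln^~ p) (divisors n))).
- by rewrite big_cat big_map -big_distrl /= mulnS addnC.
- by rewrite muln_gt0 n_gt0.
- rewrite cat_uniq divisors_uniq map_inj_uniq ?divisors_uniq ?andbT; last first.
    by move=> u v /eqP; rewrite eqn_pmul2r // => /eqP.
  apply/hasPn => _ /mapP[d _ ->]; rewrite -dvdn_divisors //.
  by apply: contra p_ndvd_n; apply: dvdn_trans; apply: dvdn_mull.
- move=> d; rewrite mem_cat dvd_np -dvdn_divisors //; congr (_ || _).
  apply/mapP/andP => [[e e_dvd ->]|[p_dvd_d dp_dvd]].
    by rewrite dvdn_mull // mulnK // dvdn_divisors.
  by exists (d %/ p); rewrite ?divnK // -dvdn_divisors.
Qed.

Lemma sigma_prime_pow p e : prime p -> sigma (p ^ e) = \sum_(i < e.+1) p ^ i.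
Proof.
move=> p_pr; rewrite (@sigmaE_uniq _ (map (expn p) (iota 0 e.+1))).
- by rewrite big_map -(big_mkord xpredT).
- by rewrite expn_gt0 prime_gt0.
- by rewrite map_inj_uniq ?iota_uniq //; apply/expnI/prime_gt1.
- move=> d; apply/mapP/idP => [[i]|].
    by rewrite mem_iota => /andP[_ i_le] ->; apply: dvdn_exp2l.
  by case/(dvdn_pfactor _ _ p_pr) => i i_le ->; exists i; rewrite ?mem_iota.
Qed.

Lemma sum_pow2 e : (\sum_(i < e.+1) 2 ^ i).+1 = 2 ^ e.+1.
Proof.
elim: e => [|e IHe]; first by rewrite big_ord1.
by rewrite big_ord_recr /= -addSn IHe [2 ^ e.+2]expnS mul2n addnn.
Qed.

Lemma sigma_pow2_mul_prime e f : prime f -> f != 2 ->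
  sigma (2 ^ e * f) = (2 ^ e.+1).-1 * f.+1.
Proof.
move=> f_pr f_neq2; rewrite sigmaM_prime ?expn_gt0 //; last first.
  by rewrite Euclid_dvdX // dvdn_prime2 // (negPf f_neq2).
by rewrite sigma_prime_pow // -sum_pow2.
Qed.

Lemma sigma_pow2_mul_f m k f : 0 < k -> f = 2 ^ (m + k + 1) + 2 ^ k - 1 ->
  prime f -> sigma (2 ^ (m + k) * f) = 2 ^ k * (2 * (2 ^ m * f) - 1).
Proof.
move=> k_gt0 f_def f_pr.
have K_ge2 : 2 <= 2 ^ k by rewrite -{1}(expn1 2) leq_exp2l.
have pow_mk1 : 2 ^ (m + k).+1 = 2 * 2 ^ m * 2 ^ k by rewrite expnS expnD mulnA.
rewrite addn1 pow_mk1 in f_def.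
rewrite sigma_pow2_mul_prime // ?pow_mk1; last by rewrite f_def; nia.
by move: f_def; nia.
Qed.

Lemma amicable_prime_triple a p q r : 0 < a ->
  prime p -> prime q -> prime r -> p != q ->
  ~~ (p %| a) -> ~~ (q %| a) -> ~~ (r %| a) ->
  r.+1 = p.+1 * q.+1 -> sigma a * r.+1 = a * (p * q + r) ->
  amicable (a * p * q) (a * r).
Proof.
move=> a_gt0 p_pr q_pr r_pr p_neq_q p_ndvd q_ndvd r_ndvd r1E sigma_aE.
have ap_gt0 : 0 < a * p by rewrite muln_gt0 a_gt0 prime_gt0.
have q_ndvd_ap : ~~ (q %| a * p).
  by rewrite Euclid_dvdM // negb_or q_ndvd dvdn_prime2 // eq_sym.
have sigma_apq : sigma (a * p * q) = a * (p * q + r).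
  by rewrite !sigmaM_prime // -sigma_aE r1E mulnA.
have sigma_ar : sigma (a * r) = a * (p * q + r) by rewrite sigmaM_prime.
split; first by rewrite muln_gt0 ap_gt0 prime_gt0.
split; first by rewrite muln_gt0 a_gt0 prime_gt0.
by rewrite sigma_apq sigma_ar mulnDr mulnA addKn addnK.
Qed.

Lemma hyperbola_nat x y b :
  ((x%:Z - b%:Z) * (y%:Z - b%:Z) = (b%:Z) ^+ 2)%R -> b * (x + y) = x * y.
Proof. by rewrite GRing.expr2; nia. Qed.

Lemma hyperbola_identity b p q r : r.+1 = p.+1 * q.+1 ->
  b * (p.+1 + q.+1) = p.+1 * q.+1 -> (2 * b - 1) * r.+1 = b * (p * q + r).
Proof. nia. Qed.

Theorem mainTheorem6 (m k x y : nat) :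
  1 <= k ->
  let f := 2 ^ (m + k + 1) + 2 ^ k - 1 in
  prime f ->
  let a := 2 ^ (m + k) * f in
  let b := 2 ^ m * f in
  0 < x -> 0 < y ->
  ((x%:Z - b%:Z) * (y%:Z - b%:Z) = (b%:Z) ^+ 2)%R ->
  prime (x - 1) -> prime (y - 1) -> prime (x * y - 1) ->
  x - 1 <> y - 1 ->
  ~~ (x - 1 %| a) -> ~~ (y - 1 %| a) -> ~~ (x * y - 1 %| a) ->
  amicable (a * (x - 1) * (y - 1)) (a * (x * y - 1)).
Proof.
move=> k_gt0 f f_pr a b x_gt0 y_gt0 hyperbola.
case: x x_gt0 hyperbola => // p _; case: y y_gt0 => // q _ hyperbola.
set r := p.+1 * q.+1 - 1; rewrite !subn1 /=.
move=> p_pr q_pr r_pr p_neq_q p_ndvd q_ndvd r_ndvd.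
have r1E : r.+1 = p.+1 * q.+1 by rewrite /r subn1 prednK // muln_gt0.
move/hyperbola_nat: hyperbola => hyperbola.
have sigma_a : sigma a = 2 ^ k * (2 * b - 1) by apply: sigma_pow2_mul_f.
have aE : a = 2 ^ k * b by rewrite /a /b addnC expnD mulnA.
apply: amicable_prime_triple => //.
- by rewrite /a muln_gt0 expn_gt0 (prime_gt0 f_pr).
- exact/eqP.
- rewrite sigma_a aE -[LHS]mulnA -[RHS]mulnA; congr (_ * _).
  exact: hyperbola_identity.
Qed.
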